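(* Let $\Psi$ be a well-formed declarative context and $\beta\notin\Psi$. If $\mathcal D$ is a derivation of $\Psi\vdash A\le\forall\beta.B$, then there is a derivation $\mathcal D'$ of $\Psi,\beta\vdash A\le B$ whose size is strictly smaller than that of $\mathcal D$.
   Context: Types $A,B ::= 1\mid\alpha\mid\forall\alpha.A\mid A\to B$ (bound variables may be renamed, so $\beta$ can be assumed not declared in $\Psi$); monotypes $\tau ::= 1\mid\alpha\mid\tau\to\tau'$. Declarative contexts $\Psi ::= \cdot\mid\Psi,\alpha\mid\Psi,x:A$. Well-formedness $\Psi\vdash A$: all free type variables of $A$ are declared in $\Psi$. Declarative subtyping $\Psi\vdash A\le B$ is the least relation with: $\alpha\in\Psi\Rightarrow\Psi\vdash\alpha\le\alpha$; $\Psi\vdash1\le1$; ($\Psi\vdash B_1\le A_1$, $\Psi\vdash A_2\le B_2$) $\Rightarrow\Psi\vdash A_1\to A_2\le B_1\to B_2$; ($\Psi\vdash\tau$ monotype, $\Psi\vdash[\tau/\alpha]A\le B$) $\Rightarrow\Psi\vdash\forall\alpha.A\le B$; ($\Psi,\beta\vdash A\le B$) $\Rightarrow\Psi\vdash A\le\forall\beta.B$. The size of a derivation is its number of rule instances. *)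

(* Locally nameless representation of the types
   A,B ::= 1 | alpha | forall alpha. A | A -> B
   Free type variables are names (nat); bound ones are de Bruijn indices,
   so alpha-equivalent types are syntactically equal. *)
From Stdlib Require Import List Arith.
Import ListNotations.

Inductive typ : Type :=
| TUnit : typ
| TFVar : nat -> typ
| TBVar : nat -> typ
| TAll  : typ -> typ
| TArr  : typ -> typ -> typ.

Fixpoint open_rec (k : nat) (u : typ) (A : typ) : typ :=
  match A with
  | TUnit => TUnit
  | TFVar a => TFVar a
  | TBVar n => if Nat.eqb n k then u else TBVar n
  | TAll A1 => TAll (open_rec (S k) u A1)
  | TArr A1 A2 => TArr (open_rec k u A1) (open_rec k u A2)
  end.

(* open A u : the body A of (forall alpha. A) with alpha := u, i.e. [u/alpha]A *)
Definition open (A u : typ) : typ := open_rec 0 u A.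

Fixpoint fv (A : typ) : list nat :=
  match A with
  | TUnit => []
  | TFVar a => [a]
  | TBVar _ => []
  | TAll A1 => fv A1
  | TArr A1 A2 => fv A1 ++ fv A2
  end.

Fixpoint closed_at (k : nat) (A : typ) : Prop :=
  match A with
  | TUnit => True
  | TFVar _ => True
  | TBVar n => n < k
  | TAll A1 => closed_at (S k) A1
  | TArr A1 A2 => closed_at k A1 /\ closed_at k A2
  end.

Fixpoint mono (A : typ) : Prop :=
  match A with
  | TUnit => True
  | TFVar _ => True
  | TBVar _ => False
  | TAll _ => False
  | TArr A1 A2 => mono A1 /\ mono A2
  end.

(* Declarative contexts Psi ::= . | Psi, alpha | Psi, x : A
   (the list head is the most recent entry). *)
Inductive ctx_entry : Type :=
| CTVar : nat -> ctx_entry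
| CVar  : nat -> typ -> ctx_entry.

Definition ctx := list ctx_entry.

Definition tvar_in (a : nat) (G : ctx) : Prop := In (CTVar a) G.

Definition var_in (x : nat) (G : ctx) : Prop := exists A, In (CVar x A) G.

Definition wft (G : ctx) (A : typ) : Prop :=
  closed_at 0 A /\ forall a, In a (fv A) -> tvar_in a G.

Inductive wfctx : ctx -> Prop :=
| wf_nil : wfctx []
| wf_tvar : forall G a, wfctx G -> ~ tvar_in a G -> wfctx (CTVar a :: G)
| wf_var : forall G x A, wfctx G -> ~ var_in x G -> wft G A ->
    wfctx (CVar x A :: G).

(* Declarative subtyping derivations (in Type, so they have a size). *)
Inductive sub : ctx -> typ -> typ -> Type :=
| S_Var : forall G a, tvar_in a G -> sub G (TFVar a) (TFVar a)
| S_Unit : forall G, sub G TUnit TUnit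
| S_Arr : forall G A1 A2 B1 B2,
    sub G B1 A1 -> sub G A2 B2 -> sub G (TArr A1 A2) (TArr B1 B2)
| S_AllL : forall G A B tau,
    mono tau -> wft G tau -> sub G (open A tau) B -> sub G (TAll A) B
| S_AllR : forall G A B b,
    (* the bound variable beta is chosen fresh (renaming of bound vars) *)
    ~ tvar_in b G -> ~ In b (fv A) -> ~ In b (fv B) ->
    sub (CTVar b :: G) A (open B (TFVar b)) -> sub G A (TAll B).

Fixpoint size {G A B} (d : sub G A B) : nat :=
  match d with
  | S_Var _ _ _ => 1
  | S_Unit _ => 1
  | S_Arr _ _ _ _ _ d1 d2 => S (size d1 + size d2)
  | S_AllL _ _ _ _ _ _ d1 => S (size d1)
  | S_AllR _ _ _ _ _ _ _ d1 => S (size d1)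
  end.

(* A derivation ending in [forall beta. B] on the right is a (possibly empty)
   chain of [forall]-left steps followed by one [forall]-right step, whose
   premise is [Psi, b' |- A' <= [b'/beta]B] for some fresh name [b'].  Left
   steps stay valid in the larger context [Psi, b] and keep their size, so it
   suffices to turn that premise into a derivation of the same size for [b]:
   swapping the names [b] and [b'] everywhere is size-preserving, fixes [A'],
   [B] and (up to the order of declarations) [Psi], and sends [b'] to [b].
   Dropping the [forall]-right instance makes the result strictly smaller. *)
From Stdlib Require Import List Arith Lia.

Definition swap_name (x y n : nat) : nat :=
  if Nat.eqb n x then y else if Nat.eqb n y then x else n.

Fixpoint swap_typ (x y : nat) (A : typ) : typ :=
  match A with
  | TUnit => TUnit
  | TFVar a => TFVar (swap_name x y a)
  | TBVar n => TBVar n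
  | TAll A1 => TAll (swap_typ x y A1)
  | TArr A1 A2 => TArr (swap_typ x y A1) (swap_typ x y A2)
  end.

Definition swap_entry (x y : nat) (e : ctx_entry) : ctx_entry :=
  match e with
  | CTVar a => CTVar (swap_name x y a)
  | CVar z T => CVar z T
  end.

Definition swap_ctx (x y : nat) (G : ctx) : ctx := map (swap_entry x y) G.

Definition same_tvars (G G' : ctx) : Prop :=
  forall a, tvar_in a G <-> tvar_in a G'.

Lemma swap_name_involutive x y n : swap_name x y (swap_name x y n) = n.
Proof.
  unfold swap_name.
  destruct (Nat.eqb_spec n x) as [->|Hx];
    [destruct (Nat.eqb_spec y x); [congruence|now rewrite Nat.eqb_refl]|].
  destruct (Nat.eqb_spec n y) as [->|Hy]; [now rewrite Nat.eqb_refl|].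
  now destruct (Nat.eqb_spec n x), (Nat.eqb_spec n y).
Qed.

Lemma swap_name_l x y : swap_name x y x = y.
Proof. unfold swap_name. now rewrite Nat.eqb_refl. Qed.

Lemma tvar_in_swap_ctx x y a G :
  tvar_in a (swap_ctx x y G) <-> tvar_in (swap_name x y a) G.
Proof.
  unfold tvar_in, swap_ctx. rewrite in_map_iff. split.
  - intros [[c|z T] [He Hin]]; inversion He; subst.
    now rewrite swap_name_involutive.
  - intros H. exists (CTVar (swap_name x y a)). simpl.
    now rewrite swap_name_involutive.
Qed.

Lemma swap_typ_open_rec x y A : forall k u,
  swap_typ x y (open_rec k u A) = open_rec k (swap_typ x y u) (swap_typ x y A).
Proof.
  induction A; intros k u; simpl; try congruence.
  now destruct (Nat.eqb n k).
Qed.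

Lemma swap_typ_open x y A u :
  swap_typ x y (open A u) = open (swap_typ x y A) (swap_typ x y u).
Proof. apply swap_typ_open_rec. Qed.

Lemma mono_swap_typ x y A : mono A -> mono (swap_typ x y A).
Proof. induction A; simpl; tauto. Qed.

Lemma closed_at_swap_typ x y A : forall k, closed_at k A -> closed_at k (swap_typ x y A).
Proof. induction A; simpl; intuition. Qed.

Lemma in_fv_swap_typ x y A a :
  In a (fv (swap_typ x y A)) -> In (swap_name x y a) (fv A).
Proof.
  induction A; simpl; intros H; rewrite ?in_app_iff in *; intuition.
  subst. rewrite swap_name_involutive. auto.
Qed.

Lemma wft_swap x y G A : wft G A -> wft (swap_ctx x y G) (swap_typ x y A).
Proof.
  intros [Hcl Hfv]. split; [now apply closed_at_swap_typ|].
  intros a Ha. apply tvar_in_swap_ctx, Hfv, in_fv_swap_typ, Ha.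
Qed.

Lemma swap_typ_fresh x y A : ~ In x (fv A) -> ~ In y (fv A) -> swap_typ x y A = A.
Proof.
  induction A; simpl; intros Hx Hy; rewrite ?in_app_iff in *; try f_equal; intuition.
  unfold swap_name.
  destruct (Nat.eqb_spec n x), (Nat.eqb_spec n y); intuition.
Qed.

Lemma sub_swap x y G A B (d : sub G A B) :
  { d' : sub (swap_ctx x y G) (swap_typ x y A) (swap_typ x y B) | size d' = size d }.
Proof.
  induction d as [G a Ha | G | G A1 A2 B1 B2 d1 [e1 He1] d2 [e2 He2]
                 | G A B tau Hm Hw d [e He] | G A B b HbG HbA HbB d [e He]].
  - assert (Ha' : tvar_in (swap_name x y a) (swap_ctx x y G)).
    { apply tvar_in_swap_ctx. now rewrite swap_name_involutive. }
    now exists (S_Var _ _ Ha').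
  - now exists (S_Unit _).
  - exists (S_Arr _ _ _ _ _ e1 e2). simpl. lia.
  - revert e He; rewrite swap_typ_open; intros e He.
    exists (S_AllL _ _ _ _ (mono_swap_typ x y _ Hm) (wft_swap x y _ _ Hw) e).
    simpl. lia.
  - revert e He; rewrite swap_typ_open; intros e He.
    assert (HbG' : ~ tvar_in (swap_name x y b) (swap_ctx x y G))
      by now rewrite tvar_in_swap_ctx, swap_name_involutive.
    assert (HbA' : ~ In (swap_name x y b) (fv (swap_typ x y A))).
    { intro H. apply in_fv_swap_typ in H. now rewrite swap_name_involutive in H. }
    assert (HbB' : ~ In (swap_name x y b) (fv (swap_typ x y B))).
    { intro H. apply in_fv_swap_typ in H. now rewrite swap_name_involutive in H. }
    exists (S_AllR _ _ _ _ HbG' HbA' HbB' e). exact (f_equal S He).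
Qed.

Lemma wft_same_tvars G G' A : same_tvars G G' -> wft G A -> wft G' A.
Proof. intros HG [Hcl Hfv]. split; [exact Hcl|]. intros a Ha. now apply HG, Hfv. Qed.

Lemma same_tvars_cons b G G' :
  same_tvars G G' -> same_tvars (CTVar b :: G) (CTVar b :: G').
Proof. intros HG a. unfold tvar_in in *; simpl. specialize (HG a). tauto. Qed.

Lemma sub_same_tvars G A B (d : sub G A B) : forall G',
  same_tvars G G' -> { d' : sub G' A B | size d' = size d }.
Proof.
  induction d as [G a Ha | G | G A1 A2 B1 B2 d1 IH1 d2 IH2
                 | G A B tau Hm Hw d IH | G A B b HbG HbA HbB d IH];
    intros G' HG.
  - now exists (S_Var _ _ (proj1 (HG a) Ha)).
  - now exists (S_Unit _).
  - destruct (IH1 G' HG) as [e1 He1], (IH2 G' HG) as [e2 He2].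
    exists (S_Arr _ _ _ _ _ e1 e2). simpl. lia.
  - destruct (IH G' HG) as [e He].
    exists (S_AllL _ _ _ _ Hm (wft_same_tvars _ _ _ HG Hw) e). simpl. lia.
  - destruct (IH _ (same_tvars_cons b _ _ HG)) as [e He].
    assert (HbG' : ~ tvar_in b G') by now rewrite <- (HG b).
    exists (S_AllR _ _ _ _ HbG' HbA HbB e). simpl. lia.
Qed.

Lemma fv_open_rec_incl A : forall k u a, In a (fv A) -> In a (fv (open_rec k u A)).
Proof. induction A; simpl; intros k u a H; rewrite ?in_app_iff in *; intuition. Qed.

Lemma sub_fv_declared G A B (d : sub G A B) :
  (forall a, In a (fv A) -> tvar_in a G) /\ (forall a, In a (fv B) -> tvar_in a G).
Proof.
  induction d as [G a Ha | G | G A1 A2 B1 B2 d1 [IH1l IH1r] d2 [IH2l IH2r]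
                 | G A B tau Hm Hw d [IHl IHr] | G A B b HbG HbA HbB d [IHl IHr]];
    simpl.
  - split; intros a' [<-|[]]; exact Ha.
  - split; intros _ [].
  - split; intros a Ha; apply in_app_or in Ha; intuition.
  - split; [|exact IHr]. intros a Ha. apply IHl, fv_open_rec_incl, Ha.
  - assert (Hdrop : forall a, tvar_in a (CTVar b :: G) -> a <> b -> tvar_in a G).
    { intros a [E|E] Hab; [inversion E; congruence|exact E]. }
    split; intros a Ha.
    + apply Hdrop; [apply IHl, Ha | intros ->; contradiction].
    + apply Hdrop; [apply IHr, fv_open_rec_incl, Ha | intros ->; contradiction].
Qed.

Lemma sub_rename_fresh G A B b b' (d : sub (CTVar b' :: G) A (open B (TFVar b'))) :
  ~ tvar_in b G -> ~ tvar_in b' G -> ~ In b' (fv A) -> ~ In b' (fv B) ->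
  { d' : sub (CTVar b :: G) A (open B (TFVar b)) | size d' = size d }.
Proof.
  intros HbG Hb'G Hb'A Hb'B.
  assert (HbA : ~ In b (fv A)).
  { intro H. destruct (proj1 (sub_fv_declared _ _ _ d) b H) as [E|E];
      [inversion E; subst; contradiction | contradiction]. }
  assert (HbB : ~ In b (fv B)).
  { intro H. pose proof (fv_open_rec_incl B 0 (TFVar b') b H) as Hopen.
    destruct (proj2 (sub_fv_declared _ _ _ d) b Hopen) as [E|E];
      [inversion E; subst; contradiction | contradiction]. }
  destruct (sub_swap b' b _ _ _ d) as [e He].
  revert e He. rewrite swap_typ_open. simpl.
  rewrite swap_name_l, (swap_typ_fresh _ _ A), (swap_typ_fresh _ _ B) by assumption.
  intros e He.
  (* the swap only exchanges [b'] and [b] inside [G], neither of which is declared there *)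
  assert (Hctx : same_tvars (CTVar b :: swap_ctx b' b G) (CTVar b :: G)).
  { intro a. unfold tvar_in. simpl. rewrite (tvar_in_swap_ctx b' b a G).
    unfold tvar_in, swap_name.
    destruct (Nat.eqb_spec a b') as [->|]; [split; intros [E|E]; auto; contradiction|].
    destruct (Nat.eqb_spec a b) as [->|]; [split; intros [E|E]; auto; contradiction|].
    tauto. }
  destruct (sub_same_tvars _ _ _ e _ Hctx) as [e' He'].
  exists e'. congruence.
Qed.

Lemma wft_cons_tvar b G A : wft G A -> wft (CTVar b :: G) A.
Proof. intros [Hcl Hfv]. split; [exact Hcl|]. intros a Ha. right. now apply Hfv. Qed.

Lemma sub_all_r_inv G A B b (d : sub G A (TAll B)) :
  ~ tvar_in b G ->
  exists d' : sub (CTVar b :: G) A (open B (TFVar b)), size d' < size d.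
Proof.
  intros HbG. remember (TAll B) as C eqn:HC.
  induction d as [| | | G A C tau Hm Hw d IH | G A C b' Hb'G Hb'A Hb'C d _];
    try discriminate.
  - destruct (IH HC HbG) as [e He].
    exists (S_AllL _ _ _ _ Hm (wft_cons_tvar b _ _ Hw) e). simpl. lia.
  - injection HC as ->.
    destruct (sub_rename_fresh _ _ _ b _ d HbG Hb'G Hb'A Hb'C) as [e He].
    exists e. simpl. lia.
Qed.

Theorem mainTheorem13 (G : ctx) (A B : typ) (b : nat) :
  wfctx G -> ~ tvar_in b G ->
  forall D : sub G A (TAll B),
    exists D' : sub (CTVar b :: G) A (open B (TFVar b)), size D' < size D.
Proof.
  intros _ HbG D. exact (sub_all_r_inv _ _ _ _ D HbG).
Qed.
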